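(* Let $\hat\rho$ be a density operator on $L^2(\mathbb R)$ with bounded Fock support. Then there exists a unique $m\in\mathbb N$ such that $\hat\rho\in\mathcal D^m\setminus\mathcal D^{m-1}$ (with the convention $\mathcal D^{-1}=\emptyset$). Moreover, $\mathcal V_t[\hat\rho]/\mathrm{Tr}\,\mathcal V_t[\hat\rho]$ converges to $\frac1{2^m}\sum_{k=0}^m\binom mk|k\rangle\langle k|$ as $t\to\infty$.
   Context: Let $\hat a$ be the annihilation operator on $L^2(\mathbb R)$, $\hat n=\hat a^\dagger\hat a$, $\{|k\rangle\}$ the Fock basis, and $\hat P_N=\sum_{k=0}^N|k\rangle\langle k|$. $\mathcal D^N$ is the set of density operators $\hat\rho$ with $\hat P_N\hat\rho\hat P_N=\hat\rho$; a density operator has bounded Fock support if it lies in some $\mathcal D^N$. For $t>0$, the Vertigo map on such operators is $\mathcal V_t[\hat A]=\sum_{k\ge0}\frac{(t-1)^k}{k!}t^{\hat n/2}\hat a^k\hat A\hat a^{\dagger k}t^{\hat n/2}$ (finite sum), equivalently characterized on Wigner functions $W_{\hat A}(\alpha)=\frac2\pi\mathrm{Tr}[\hat A\hat D(\alpha)(-1)^{\hat n}\hat D(\alpha)^\dagger]$, $\hat D(\alpha)=\exp(\alpha\hat a^\dagger-\alpha^*\hat a)$, by $W_{\mathcal V_t[\hat A]}(\alpha)=W_{\hat A}(\sqrt t\alpha)e^{2(t-1)|\alpha|^2}$. *)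

From mathcomp Require Import all_boot all_order all_algebra.
From mathcomp Require Import complex.
From mathcomp Require Import all_classical all_reals all_analysis.
Import numFieldNormedType.Exports.
Set Implicit Arguments. Unset Strict Implicit. Unset Printing Implicit Defensive.
Import Order.TTheory GRing.Theory Num.Theory.
Local Open Scope ring_scope.
Local Open Scope classical_set_scope.

(* An operator A with bounded Fock support, A = P_N A P_N, is represented by
   its matrix (<i|A|j>)_{0 <= i,j <= N} in the Fock basis |0>,...,|N>,
   i.e. an element of 'M[R[i]]_(N.+1), standing for sum_{i,j} A i j |i><j|. *)

Section Fock.
Variable R : realType.
Variable N : nat.
Local Notation C := (R[i]).
Local Notation M := 'M[C]_(N.+1).

Definition adjoint m n (A : 'M[C]_(m, n)) : 'M[C]_(n, m) :=
  \matrix_(i, j) (A j i)^*.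

Definition is_density (A : M) : Prop :=
  (forall v : 'cV[C]_(N.+1), 0 <= (adjoint v *m A *m v) 0 0) /\ \tr A = 1.

Definition projP (m : nat) : M := \matrix_(i, j) (if (i == j) && (i <= m)%N then 1 else 0).

Definition inD (m : nat) (A : M) : Prop := is_density A /\ projP m *m A *m projP m = A.

Definition inDpred (m : nat) (A : M) : Prop :=
  if m is m'.+1 then inD m' A else False.

(* annihilation operator: a|j> = sqrt j |j-1>, i.e. <i|a|j> = sqrt j [i+1 = j].
   Restricted to span{|0..N>} it is exact since a lowers the Fock index;
   and for A = P_N A P_N, A a^dag^k = A P_N a^dag^k P_N, so the truncated
   products below coincide with the products on L^2(R). *)
Definition amat : M :=
  \matrix_(i, j) (if (i.+1 == j :> nat) then ((Num.sqrt (j%:R : R))%:C)%C else 0).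

Definition adag : M := adjoint amat.

(* t^(n/2) : |j> |-> t^(j/2) |j> *)
Definition tn (t : R) : M := \matrix_(i, j) (if i == j then ((Num.sqrt t ^+ i)%:C)%C else 0).

(* Vertigo map V_t[A] = sum_k (t-1)^k/k! t^(n/2) a^k A a^dag^k t^(n/2);
   terms with k > N vanish. *)
Definition vertigo (t : R) (A : M) : M :=
  \sum_(k < N.+1) ((((t - 1) ^+ k / (k`!)%:R)%:C)%C *:
                   (tn t *m (amat ^+ k) *m A *m (adag ^+ k) *m tn t)).

Definition binom_state (m : nat) : M :=
  \matrix_(i, j) (if (i == j) && (i <= m)%N
                  then (((('C(m, i))%:R / (2 ^+ m)) : R)%:C)%C else 0).

Definition mx_cvg_pinfty (F : R -> M) (L : M) : Prop :=
  forall i j,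
    (complex.Re (F t i j) @[t --> +oo] --> complex.Re (L i j)) /\
    (complex.Im (F t i j) @[t --> +oo] --> complex.Im (L i j)).

End Fock.

From mathcomp Require Import all_boot all_order all_algebra.
From mathcomp Require Import complex.
From mathcomp Require Import all_classical all_reals all_analysis.
From mathcomp Require Import zify ring lra.
Set Implicit Arguments. Unset Strict Implicit. Unset Printing Implicit Defensive.
Import Order.TTheory GRing.Theory Num.Theory.
Import numFieldNormedType.Exports.
Local Open Scope ring_scope.
Local Open Scope classical_set_scope.

(* Since a|j> = sqrt j |j-1>, the matrix elements of the Vertigo map are
     <i|V_t[A]|j> = sum_k (t-1)^k/k! t^((i+j)/2)
                      sqrt((i+k)!/i! * (j+k)!/j!) <i+k|A|j+k>.
   Let d be the largest Fock index occurring in the support of A, i.e. the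
   unique d with A in D^d \ D^(d-1).  After division by t^d, only the terms
   with i + k = j + k = d survive as t -> oo, so V_t[A]/t^d tends to
   <d|A|d> sum_i C(d,i) |i><i|, whose trace is 2^d <d|A|d>.  For a density
   operator <d|A|d> > 0: a vanishing diagonal entry of a positive matrix
   kills its row and column, which would put A in D^(d-1).  Dividing the two
   limits gives the binomial state.  Entrywise convergence of real and
   imaginary parts is proved at once for an arbitrary R-linear functional
   on C. *)

Lemma trmxX (K : comPzRingType) n (A : 'M[K]_n) k : (A^T) ^+ k = (A ^+ k)^T.
Proof.
elim: k => [|k IH]; first by rewrite !expr0 trmx1.
by rewrite exprSr IH -mulmxE -trmx_mul mulmxE -exprS.
Qed.

Lemma diag_sandwich_entry (K : pzRingType) n (d : 'rV[K]_n) (X : 'M[K]_n) i j :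
  (diag_mx d *m X *m diag_mx d) i j = d 0 i * X i j * d 0 j.
Proof. by rewrite mul_mx_diag mul_diag_mx !mxE. Qed.

Lemma sum_if_eq_mul (K : pzSemiRingType) n (x : K) (F : 'I_n.+1 -> K) (c : nat) :
  \sum_(l < n.+1) (if c == l :> nat then x else 0) * F l =
  if (c < n.+1)%N then x * F (inord c) else 0.
Proof.
rewrite (eq_bigr (fun l : 'I_n.+1 => if l == c :> nat then x * F (inord l) else 0)).
  by rewrite -big_mkcond (big_ord1_eq _ (fun l : nat => x * F (inord l))).
by move=> l _; rewrite eq_sym inord_val; case: ifP; rewrite ?mul0r.
Qed.

Lemma sum_binomial (K : pzSemiRingType) n d : (d <= n)%N ->
  \sum_(i < n.+1) ('C(d, i))%:R = 2 ^+ d :> K.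
Proof.
move=> le_dn; rewrite -[2 : K]/(1 + 1) exprD1n.
rewrite (big_ord_widen n.+1 (fun i => 1 ^+ i *+ 'C(d, i)) (le_dn : d.+1 <= n.+1)%N).
rewrite [RHS]big_mkcond /=; apply: eq_bigr => i _; rewrite expr1n.
by case: ltnP => // lt_di; rewrite bin_small.
Qed.

Lemma top_index (i j k d : nat) :
  [&& i + k <= d, j + k <= d & i + j + k.*2 == d.*2]%N =
  [&& k == d - i, i == j & i <= d]%N.
Proof. by apply/idP/idP => /and3P[? ? ?]; apply/and3P; split; lia. Qed.

Lemma ge0_conj_affine (R : rcfType) (d x y : R[i]) :
  (forall c, 0 <= d + c * x + c^* * y) -> x = 0.
Proof.
case: d x y => [d1 d2] [a b] [p q] ge0.
have := ge0 0; have := ge0 1; have := ge0 'i%C.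
rewrite !lecE /= => /andP[/eqP im_i _] /andP[/eqP im_1 _] /andP[/eqP im_0 d1_ge0].
have [pa qNb] : p = a /\ q = - b by split; lra.
subst p q.
suff s0 : a ^+ 2 + b ^+ 2 = 0.
  by have [-> ->] : a = 0 /\ b = 0 by split; nra.
have [//|s_neq0] := eqVneq (a ^+ 2 + b ^+ 2) 0; exfalso.
(* [c = - r x^*] with [r |x|^2 = d1 + 1] makes the real part [- d1 - 2]. *)
pose r := (d1 + 1) / (a ^+ 2 + b ^+ 2).
have r_s : r * (a ^+ 2 + b ^+ 2) = d1 + 1 by rewrite mulfVK.
have := ge0 ((- r * a) +i* (r * b))%C; rewrite lecE /= => /andP[_].
lra.
Qed.

Section Asymptotics.
Variable R : realType.

Lemma near_pinfty_gt0 : \forall t \near +oo, 0 < t :> R.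
Proof. by apply: nbhs_pinfty_gt; rewrite num_real. Qed.

Lemma cvg_exprn (f : R -> R) (a : R) n :
  f @ +oo --> a -> (fun t => f t ^+ n) @ +oo --> a ^+ n.
Proof.
move=> fa; elim: n => [|n IH].
  by rewrite expr0; under eq_cvg do rewrite expr0; exact: cvg_cst.
by rewrite exprS; under eq_cvg do rewrite exprS; exact: cvgM.
Qed.

Lemma cvgy_invr : (fun t : R => t^-1) @ +oo --> (0 : R).
Proof. by apply/gtr0_cvgV0; [exact: near_pinfty_gt0 | exact: cvg_id]. Qed.

Lemma cvgy_invr_sqrt : (fun t : R => (Num.sqrt t)^-1) @ +oo --> (0 : R).
Proof.
have sqrtV : \forall t \near +oo, Num.sqrt t^-1 = (Num.sqrt t)^-1 :> R.
  by near=> t; rewrite sqrtrV // ltW //; near: t; exact: near_pinfty_gt0.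
apply: cvg_trans (near_eq_cvg sqrtV) _; rewrite -sqrtr0.
exact: (cvg_comp _ _ cvgy_invr (@sqrt_continuous R 0)).
Unshelve. all: by end_near. Qed.

Lemma cvgy_subr1_div : (fun t : R => (t - 1) / t) @ +oo --> (1 : R).
Proof.
have E : \forall t \near +oo, 1 - t^-1 = (t - 1) / t :> R.
  near=> t; have t_gt0 : 0 < t by near: t; exact: near_pinfty_gt0.
  by rewrite mulrBl divff ?mul1r // gt_eqF.
apply: cvg_trans (near_eq_cvg E) _.
by have := cvgB (cvg_cst (1 : R)) cvgy_invr; rewrite subr0; exact.
Unshelve. all: by end_near. Qed.

(* Writing [t = s ^+ 2], the quotient is [((t - 1) / t) ^+ k * s ^- e] with
   [e = 2 m - n - 2 k]. *)
Lemma cvgy_pow_ratio (k n m : nat) : (n + k.*2 <= m.*2)%N ->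
  (fun t : R => (t - 1) ^+ k * Num.sqrt t ^+ n / t ^+ m) @ +oo -->
  ((n + k.*2 == m.*2)%N%:R : R).
Proof.
move=> le_nkm; set e := (m.*2 - (n + k.*2))%N.
have E : \forall t \near +oo, ((t - 1) / t) ^+ k * ((Num.sqrt t)^-1) ^+ e =
                              (t - 1) ^+ k * Num.sqrt t ^+ n / t ^+ m :> R.
  near=> t; have t_gt0 : 0 < t by near: t; exact: near_pinfty_gt0.
  have s_neq0 : Num.sqrt t != 0 by rewrite gt_eqF // sqrtr_gt0.
  have t_sq : t = Num.sqrt t ^+ 2 by rewrite sqr_sqrtr // ltW.
  have -> : t ^+ m = t ^+ k * Num.sqrt t ^+ n * Num.sqrt t ^+ e.
    rewrite {1 2}t_sq -!exprM -!exprD; congr (_ ^+ _); rewrite /e; lia.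
  rewrite expr_div_n exprVn; field.
  by rewrite !expf_neq0 // gt_eqF.
apply: cvg_trans (near_eq_cvg E) _.
have -> : ((n + k.*2 == m.*2)%N%:R : R) = 1 ^+ k * 0 ^+ e.
  by rewrite expr1n mul1r expr0n /e subn_eq0 eqn_leq le_nkm.
apply: cvgM; apply: cvg_exprn; [exact: cvgy_subr1_div | exact: cvgy_invr_sqrt].
Unshelve. all: by end_near. Qed.

End Asymptotics.

Section ScalarFunctional.
Variables (R : realType) (phi : {scalar Rcomplex R}).

Lemma scalar_realM (r : R) (z : R[i]) : phi (r%:C%C * z) = r * phi z.
Proof.
have -> : r%:C%C * z = r *: (z : Rcomplex R).
  by case: z => a b; congr (_ +i* _)%C; rewrite /=; ring.
exact: linearZ.
Qed.

Lemma cvgy_scalar_comb n (r : 'I_n -> R -> R) (l : 'I_n -> R) (w : 'I_n -> R[i]) :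
  (forall k, r k @ +oo --> l k) ->
  (fun t => phi (\sum_(k < n) (r k t)%:C%C * w k)) @ +oo -->
  phi (\sum_(k < n) (l k)%:C%C * w k).
Proof.
move=> rl; have phi_comb (c : 'I_n -> R) :
    phi (\sum_(k < n) (c k)%:C%C * w k) = \sum_(k < n) c k * phi (w k).
  by rewrite linear_sum; apply: eq_bigr => k _; exact: scalar_realM.
under eq_cvg do rewrite phi_comb.
rewrite phi_comb; apply: cvg_big => [|k _]; first exact: add_continuous.
by apply: cvgM => //; exact: cvg_cst.
Qed.

End ScalarFunctional.

Lemma real_complexE (R : rcfType) (z : R[i]) :
  complex.Im z = 0 -> z = (complex.Re z)%:C%C.
Proof. by case: z => a b /= ->. Qed.

Section Fock.
Variables (R : realType) (N : nat).
Local Notation C := R[i].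
Local Notation M := 'M[C]_(N.+1).

(* [<a|A|b>] for arbitrary indices, with the value 0 beyond the truncation. *)
Definition fock_entry (A : M) (a b : nat) : C :=
  if (a < N.+1)%N && (b < N.+1)%N then A (inord a) (inord b) else 0.

Definition ladder (i k : nat) : R := Num.sqrt ((i + k)`!%:R / i`!%:R).

Lemma ladder0 i : ladder i 0 = 1.
Proof.
have fact_neq0 : (i`!%:R : R) != 0 by rewrite pnatr_eq0 -lt0n fact_gt0.
by rewrite /ladder addn0 divff // sqrtr1.
Qed.

Lemma ladderS i k : ladder i k.+1 = ladder i k * Num.sqrt (i + k).+1%:R.
Proof.
rewrite /ladder -sqrtrM ?divr_ge0 ?ler0n //; congr Num.sqrt.
by rewrite addnS factS natrM -mulrA mulrC.
Qed.

Lemma ladder_sqr_binom i d : (i <= d)%N ->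
  ladder i (d - i) * ladder i (d - i) / (d - i)`!%:R = 'C(d, i)%:R.
Proof.
move=> le_id; rewrite -expr2 sqr_sqrtr ?divr_ge0 ?ler0n // subnKC //.
rewrite -(bin_fact le_id) !natrM; field.
by rewrite !pnatr_eq0 -!lt0n !fact_gt0.
Qed.

Lemma amatX k (i j : 'I_N.+1) :
  (amat R N ^+ k) i j = if (i + k)%N == j :> nat then (ladder i k)%:C%C else 0.
Proof.
elim: k j => [|k IH] j.
  rewrite expr0 mxE addn0 ladder0 rmorph1.
  by have -> : (i == j) = ((i : nat) == j) by []; case: ifP.
rewrite exprSr mxE; under eq_bigr => l _ do rewrite IH.
rewrite sum_if_eq_mul mxE addnS.
case: (ltnP (i + k) N.+1) => [lt_ik|le_ik]; last first.
  by rewrite ifN //; apply/eqP => e; have := ltn_ord j; lia.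
rewrite inordK //; case: eqP => [<-|_]; last by rewrite mulr0.
by rewrite ladderS rmorphM.
Qed.

Lemma adagX k : adag R N ^+ k = (amat R N ^+ k)^T.
Proof.
rewrite -trmxX; congr (_ ^+ _); apply/matrixP => i j; rewrite !mxE.
by case: ifP => _; rewrite ?conjc0 // conj_Creal // complex_real.
Qed.

Lemma tn_diag (t : R) : tn N t = diag_mx (\row_i ((Num.sqrt t ^+ i)%:C%C)).
Proof.
apply/matrixP => i j; rewrite !mxE.
by case: (i =P j) => [->|/eqP ne]; rewrite ?eqxx ?mulr1n // (negbTE ne) mulr0n.
Qed.

Lemma amatX_sandwich_entry k (A : M) (i j : 'I_N.+1) :
  (amat R N ^+ k *m A *m adag R N ^+ k) i j =
  (ladder i k * ladder j k)%:C%C * fock_entry A (i + k) (j + k).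
Proof.
rewrite adagX -mulmxA mxE; under eq_bigr => l _ do rewrite amatX mxE.
rewrite sum_if_eq_mul /fock_entry; case: ltnP => _; last by rewrite mulr0.
under eq_bigr => l _ do rewrite mxE amatX mulrC.
rewrite sum_if_eq_mul; case: ltnP => _; last by rewrite !mulr0.
by rewrite rmorphM /=; ring.
Qed.

Lemma vertigo_entry (t : R) (A : M) (i j : 'I_N.+1) :
  vertigo t A i j = \sum_(k < N.+1)
    ((t - 1) ^+ k * Num.sqrt t ^+ (i + j) * (ladder i k * ladder j k / k`!%:R))%:C%C
      * fock_entry A (i + k) (j + k).
Proof.
rewrite /vertigo summxE; apply: eq_bigr => k _.
have -> : tn N t *m amat R N ^+ k *m A *m adag R N ^+ k *m tn N t =
          tn N t *m (amat R N ^+ k *m A *m adag R N ^+ k) *m tn N t.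
  by rewrite !mulmxA.
rewrite mxE tn_diag diag_sandwich_entry amatX_sandwich_entry !mxE exprD.
by rewrite !rmorphM /=; ring.
Qed.

Lemma vertigo_trace_real (A : M) (t : R) :
  (forall a, complex.Im (A a a) = 0) -> complex.Im (\tr (vertigo t A)) = 0.
Proof.
move=> diag_real; rewrite /mxtrace linear_sum big1 // => a _.
rewrite vertigo_entry linear_sum big1 // => k _.
rewrite scalar_realM /fock_entry; case: ifP => _; last by rewrite mulr0.
by apply/eqP; rewrite mulf_eq0; apply/orP; right; exact/eqP/diag_real.
Qed.

Definition psd_mx (A : M) : Prop :=
  forall v : 'cV[C]_(N.+1), 0 <= (adjoint v *m A *m v) 0 0.

Definition two_level (a b : 'I_N.+1) (c : C) : 'cV[C]_(N.+1) :=
  delta_mx a 0 + c *: delta_mx b 0.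

Lemma sum_mul_two_level (F : 'I_N.+1 -> C) a b c :
  \sum_l F l * two_level a b c l 0 = F a + c * F b.
Proof.
under eq_bigr => l _ do rewrite !mxE !andbT mulrDr mulrCA !mulr_natr !mulrb.
by rewrite big_split /= -mulr_sumr -!big_mkcond /= !big_pred1_eq.
Qed.

Lemma two_level_conj a b c l : (two_level a b c l 0)^* = two_level a b c^* l 0.
Proof. by rewrite !mxE rmorphD rmorphM /= !rmorph_nat. Qed.

Lemma two_level_form (A : M) a b c :
  (adjoint (two_level a b c) *m A *m two_level a b c) 0 0 =
  A a a + c * A a b + c^* * A b a + c^* * c * A b b.
Proof.
rewrite mxE sum_mul_two_level !mxE.
under eq_bigr => l _ do rewrite mxE two_level_conj mulrC.
under [X in _ + c * X]eq_bigr => l _ do rewrite mxE two_level_conj mulrC.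
by rewrite !sum_mul_two_level; ring.
Qed.

Lemma psd_diag_ge0 (A : M) a : psd_mx A -> 0 <= A a a.
Proof.
move=> /(_ (two_level a a 0)); rewrite two_level_form.
by rewrite rmorph0 !mul0r !addr0.
Qed.

Lemma psd_diag_eq0 (A : M) a : psd_mx A -> A a a = 0 ->
  forall j, A j a = 0 /\ A a j = 0.
Proof.
move=> psdA Aaa0 j.
have ge0 c : 0 <= A j j + c * A j a + c^* * A a j.
  by have := psdA (two_level j a c); rewrite two_level_form Aaa0 mulr0 addr0.
split; first exact: ge0_conj_affine ge0.
apply: (@ge0_conj_affine _ (A j j) _ (A j a)) => c.
by have := ge0 c^*; rewrite conjCK addrAC.
Qed.

Definition fock_degree (A : M) : nat :=
  (\max_(ij : 'I_N.+1 * 'I_N.+1 | A ij.1 ij.2 != 0%R) maxn ij.1 ij.2)%N.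

Lemma fock_degree_leq (A : M) : (fock_degree A <= N)%N.
Proof. by apply/bigmax_leqP => ij _; rewrite geq_max !leq_ord. Qed.

Lemma fock_entry_eq0 (A : M) a b :
  (fock_degree A < maxn a b)%N -> fock_entry A a b = 0.
Proof.
rewrite /fock_entry; case: ifP => // /andP[lt_aN lt_bN] lt_deg.
apply/eqP; apply: contraTT lt_deg => Aab_neq0; rewrite -leqNgt.
have := @leq_bigmax_cond _ (fun ij : 'I_N.+1 * 'I_N.+1 => A ij.1 ij.2 != 0)
  (fun ij => maxn ij.1 ij.2) (inord a, inord b) Aab_neq0.
by rewrite /= !inordK.
Qed.

Lemma fock_degree_attained (A : M) i : A i i != 0 ->
  exists2 kl : 'I_N.+1 * 'I_N.+1, A kl.1 kl.2 != 0 & maxn kl.1 kl.2 = fock_degree A.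
Proof.
move=> Aii_neq0; have := @bigop.bigmax_eq_arg _ (i, i)
  (fun kl => A kl.1 kl.2 != 0) (fun kl => maxn kl.1 kl.2) Aii_neq0.
by case: arg_maxnP => // kl Akl _ deg_eq; exists kl.
Qed.

Lemma projP_diag m : projP R N m = diag_mx (\row_i ((i <= m)%N%:R)).
Proof.
apply/matrixP => i j; rewrite !mxE.
by rewrite mulrb; case: (i == j); case: (i <= m)%N.
Qed.

Lemma fock_degree_leqP m (A : M) :
  reflect (projP R N m *m A *m projP R N m = A) (fock_degree A <= m)%N.
Proof.
apply: (iffP (bigmax_leqP _ _ _)) => [le_m|PAP [i j] /= Aij_neq0].
  apply/matrixP => i j; rewrite projP_diag diag_sandwich_entry !mxE.
  have [->|Aij_neq0] := eqVneq (A i j) 0; first by rewrite mulr0 mul0r.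
  have := le_m (i, j) Aij_neq0; rewrite geq_max => /andP[-> ->].
  by rewrite mulr1 mul1r.
move: Aij_neq0; rewrite -{1}PAP projP_diag diag_sandwich_entry !mxE geq_max.
by case: (i <= m)%N; case: (j <= m)%N; rewrite ?mulr0 ?mul0r ?eqxx.
Qed.

Lemma inD_degree m (A : M) : inD m A <-> is_density A /\ (fock_degree A <= m)%N.
Proof. by split=> -[densA /fock_degree_leqP]. Qed.

Lemma exact_fock_degree m (A : M) :
  inD m A /\ ~ inDpred m A <-> is_density A /\ fock_degree A = m.
Proof.
case: m => [|m] /=; rewrite !inD_degree.
  rewrite leqn0; split=> [[[densA /eqP deg0] _]|[densA /eqP deg0]]; first by split.
  by split=> [|[]].
split=> [[[densA le_deg] not_le]|[densA deg_m]].
  split=> //; apply/eqP; rewrite eqn_leq le_deg leqNgt ltnS.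
  by apply/negP => le_deg'; exact: not_le.
by rewrite deg_m ltnn; split=> [|[]].
Qed.

Lemma density_top_entry_neq0 (A : M) (D := inord (fock_degree A) : 'I_N.+1) :
  is_density A -> A D D != 0.
Proof.
move=> [psdA trA]; have D_val : D = fock_degree A :> nat.
  by rewrite inordK // ltnS fock_degree_leq.
have [i Aii_neq0] : exists i, A i i != 0.
  case: (pickP (fun i => A i i != 0)) => [i Aii_neq0 | diag0]; first by exists i.
  move: trA; rewrite /mxtrace big1 => [/esym/eqP|i _]; first by rewrite oner_eq0.
  exact/eqP/negbFE/diag0.
have [[k l] /= Akl_neq0 max_kl] := fock_degree_attained Aii_neq0.
apply: contraNneq Akl_neq0 => ADD0; have line0 := psd_diag_eq0 psdA ADD0.
case: (leqP k l) => [/maxn_idPr|/ltnW/maxn_idPl] max_eq; rewrite max_eq in max_kl.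
  have -> : l = D by apply: val_inj; rewrite /= D_val.
  by rewrite (line0 k).1.
have -> : k = D by apply: val_inj; rewrite /= D_val.
by rewrite (line0 l).2.
Qed.

Lemma mxtrace_binom_state d : (d <= N)%N -> \tr (binom_state R N d) = 1.
Proof.
move=> le_dN; rewrite /mxtrace.
transitivity ((\sum_(i < N.+1) ('C(d, i))%:R / 2 ^+ d : R)%:C%C).
  rewrite rmorph_sum; apply: eq_bigr => i _; rewrite mxE eqxx /=.
  by case: leqP => // lt_di; rewrite bin_small // mul0r.
by rewrite -mulr_suml sum_binomial // divff ?rmorph1.
Qed.

Lemma sum_top_terms (A : M) d (i j : 'I_N.+1) : (d <= N)%N ->
  \sum_(k < N.+1)
    (if [&& (k : nat) == d - i, i == j :> nat & i <= d]%N
     then ladder i k * ladder j k / k`!%:R else 0)%:C%C * fock_entry A (i + k) (j + k) =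
  (2 ^+ d)%:C%C * fock_entry A d d * binom_state R N d i j.
Proof.
move=> le_dN; pose c := ladder i (d - i) * ladder j (d - i) / (d - i)`!%:R.
rewrite (eq_bigr (fun k : 'I_N.+1 => if (k : nat) == (d - i)%N then
    (if (i == j :> nat) && (i <= d)%N then c else 0)%:C%C * fock_entry A d d
    else 0)); last first.
  move=> k _; case: eqP => [->|_]; last by rewrite rmorph0 mul0r.
  rewrite /=; case: ifP => [/andP[/eqP <- le_id]|_]; last by rewrite rmorph0 !mul0r.
  by rewrite subnKC.
rewrite -big_mkcond (big_ord1_eq _ (fun k => (if (i == j :> nat) && (i <= d)%N
  then c else 0)%:C%C * fock_entry A d d)) ltnS (leq_trans (leq_subr _ _) le_dN).
rewrite mxE -(inj_eq val_inj) /=; case: ifP => [/andP[/eqP ij le_id]|_]; last first.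
  by rewrite rmorph0 !mulr0 mul0r.
have two_neq0 : (2 ^+ d : R) != 0 by rewrite expf_neq0 // pnatr_eq0.
rewrite /c -ij ladder_sqr_binom // rmorphM /= [RHS]mulrC !mulrA -rmorphM /=.
by rewrite -rmorphM /= divfK.
Qed.

Section ScaledVertigo.
Variable phi : {scalar Rcomplex R}.

Lemma vertigo_scaled_cvg (A : M) d (i j : 'I_N.+1) :
  (fock_degree A <= d <= N)%N ->
  (fun t => phi ((t ^- d)%:C%C * vertigo t A i j)) @ +oo -->
  phi ((2 ^+ d)%:C%C * fock_entry A d d * binom_state R N d i j).
Proof.
move=> /andP[deg_le_d le_dN]; rewrite -sum_top_terms //.
pose c k := ladder i k * ladder j k / k`!%:R.
have scaledE t : (t ^- d)%:C%C * vertigo t A i j = \sum_(k < N.+1)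
    (if ((i + k <= d) && (j + k <= d))%N
     then (t - 1) ^+ k * Num.sqrt t ^+ (i + j) / t ^+ d * c k else 0)%:C%C
      * fock_entry A (i + k) (j + k).
  rewrite vertigo_entry mulr_sumr; apply: eq_bigr => k _; case: ifP => [_|not_top].
    by rewrite mulrA -rmorphM /=; congr (_%:C%C * _); rewrite /c; ring.
  rewrite fock_entry_eq0 ?mulr0 //; apply: leq_ltn_trans deg_le_d _.
  by rewrite leq_max !ltnNge -negb_and not_top.
under eq_cvg do rewrite scaledE.
apply: cvgy_scalar_comb => k.
rewrite -top_index andbA; case top: ((i + k <= d) && (j + k <= d))%N => /=.
  move: top => /andP[le_ik le_jk].
  have -> : (if (i + j + k.*2 == d.*2)%N then c k else 0) =
            (i + j + k.*2 == d.*2)%N%:R * c k by case: eqP; rewrite ?mul1r ?mul0r.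
  apply: cvgM; last exact: cvg_cst.
  by apply: cvgy_pow_ratio; lia.
exact: cvg_cst.
Qed.

End ScaledVertigo.

Lemma vertigo_scaled_trace_cvg (A : M) d : (fock_degree A <= d <= N)%N ->
  (fun t => complex.Re ((t ^- d)%:C%C * \tr (vertigo t A))) @ +oo -->
  2 ^+ d * complex.Re (fock_entry A d d).
Proof.
move=> /andP[deg_le_d le_dN].
have -> : 2 ^+ d * complex.Re (fock_entry A d d) = \sum_(a < N.+1)
    complex.Re ((2 ^+ d)%:C%C * fock_entry A d d * binom_state R N d a a).
  rewrite -linear_sum -mulr_sumr.
  have := mxtrace_binom_state le_dN; rewrite /mxtrace => ->.
  by rewrite mulr1 -scalar_realM.
under eq_cvg do rewrite /mxtrace mulr_sumr linear_sum.
apply: cvg_big => [|a _]; first exact: add_continuous.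
by apply: vertigo_scaled_cvg; rewrite deg_le_d le_dN.
Qed.

(* The trace of [V_t[A]] is real, so dividing by it commutes with [phi]. *)
Lemma vertigo_normalized_cvg (phi : {scalar Rcomplex R}) (A : M) (i j : 'I_N.+1) :
  is_density A ->
  (fun t => phi (((\tr (vertigo t A))^-1 *: vertigo t A) i j)) @ +oo -->
  phi (binom_state R N (fock_degree A) i j).
Proof.
move=> densA; set d := fock_degree A; set D : 'I_N.+1 := inord d.
have deg_range : (d <= d <= N)%N by rewrite leqnn fock_degree_leq.
have diag_ge0 a : complex.Im (A a a) = 0 /\ 0 <= complex.Re (A a a).
  by have := psd_diag_ge0 a densA.1; rewrite lecE => /andP[/eqP].
set p := complex.Re (A D D).
have entryE : fock_entry A d d = p%:C%C.
  by rewrite /fock_entry ltnS fock_degree_leq -real_complexE ?(diag_ge0 D).1.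
have p_gt0 : 0 < p.
  rewrite lt_def (diag_ge0 D).2 andbT; apply: contraNneq (density_top_entry_neq0 densA).
  by rewrite [A D D]real_complexE ?(diag_ge0 D).1 // -/p => ->.
have limit_neq0 : 2 ^+ d * p != 0.
  by rewrite mulf_neq0 ?gt_eqF // expf_neq0 // pnatr_eq0.
pose T t := complex.Re ((t ^- d)%:C%C * \tr (vertigo t A)).
have normalizedE : \forall t \near +oo,
    (T t)^-1 * phi ((t ^- d)%:C%C * vertigo t A i j) =
    phi (((\tr (vertigo t A))^-1 *: vertigo t A) i j).
  near=> t; have t_gt0 : 0 < t by near: t; exact: near_pinfty_gt0.
  rewrite /T mxE [\tr _]real_complexE; last first.
    by apply: vertigo_trace_real => a; exact: (diag_ge0 a).1.
  rewrite -fmorphV -rmorphM !scalar_realM /= invfM [_^-1 * _]mulrC -mulrA mulKf //.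
  by rewrite invr_neq0 // expf_neq0 // gt_eqF.
apply: cvg_trans (near_eq_cvg normalizedE) _.
have -> : phi (binom_state R N d i j) =
    (2 ^+ d * p)^-1 * phi ((2 ^+ d)%:C%C * fock_entry A d d * binom_state R N d i j).
  by rewrite entryE -rmorphM scalar_realM mulKf.
apply: cvgM; last exact: vertigo_scaled_cvg.
apply: cvgV => //; have -> : p = complex.Re (fock_entry A d d) by rewrite entryE.
exact: vertigo_scaled_trace_cvg.
Unshelve. all: by end_near. Qed.

End Fock.

Theorem lemma12 (R : realType) (N : nat) (rho : 'M[R[i]]_(N.+1)) :
  is_density rho ->
  (exists! m : nat, inD m rho /\ ~ inDpred m rho) /\
  (forall m : nat, inD m rho -> ~ inDpred m rho ->
     mx_cvg_pinfty
       (fun t : R => (\tr (vertigo t rho))^-1 *: vertigo t rho)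
       (@binom_state R N m)).
Proof.
move=> densA; split.
  exists (fock_degree rho); split; first exact/exact_fock_degree.
  by move=> m /exact_fock_degree[_ ->].
move=> m inDm not_inDpred i j.
have [_ <-] := (exact_fock_degree m rho).1 (conj inDm not_inDpred).
by split; apply: vertigo_normalized_cvg.
Qed.
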